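(* For a magma $M$ the following are equivalent: (1) $M$ is equidecomposable and graded; (2) $M$ is equidecomposable and semigraded; (3) $M$ is equidecomposable and initial; (4) $M$ is free.
   Context: A magma is a set $M$ with a binary operation $+$. $M$ is equidecomposable if $x+y=x'+y'$ implies $x=x'$ and $y=y'$. $\mathbb{N}$ denotes the positive integers. $M$ is graded if there is $\ell:M\to\mathbb{N}$ with $\ell(x+y)=\ell(x)+\ell(y)$; $M$ is semigraded if there is $\mu:M\to\mathbb{N}$ with $\mu(x+y)>\mu(x),\mu(y)$. The initial part $\mathfrak{I}(M)$ is the submagma generated by the indecomposable elements $M\setminus(M+M)$, and $M$ is initial if $\mathfrak{I}(M)=M$. $M$ is free if it is isomorphic to the free magma $\mathbb{M}_A$ (non-associative words over a non-empty set $A$ with $x+y=(x,y)$) for some $A$. *)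

(* The free magma M_A: non-associative words over A, with x + y = (x, y). *)
Inductive word (A : Type) : Type :=
  | wleaf : A -> word A
  | wnode : word A -> word A -> word A.
Arguments wleaf {A} _.
Arguments wnode {A} _ _.

Section Magma.
Variable M : Type.
Variable op : M -> M -> M.

Definition equidecomposable : Prop :=
  forall x y x' y', op x y = op x' y' -> x = x' /\ y = y'.

Definition graded : Prop :=
  exists l : M -> nat,
    (forall x, 0 < l x) /\ (forall x y, l (op x y) = l x + l y).

Definition semigraded : Prop :=
  exists mu : M -> nat,
    (forall x, 0 < mu x) /\ (forall x y, mu x < mu (op x y) /\ mu y < mu (op x y)).

Definition indecomposable (x : M) : Prop := ~ exists a b, op a b = x.

Inductive initial_part : M -> Prop :=
  | ip_gen : forall x, indecomposable x -> initial_part x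
  | ip_op : forall x y, initial_part x -> initial_part y -> initial_part (op x y).

Definition initial : Prop := forall x, initial_part x.

Definition free_magma : Prop :=
  exists (A : Type), inhabited A /\
    exists f : M -> word A,
      (forall x y, f x = f y -> x = y) /\
      (forall w, exists x, f x = w) /\
      (forall x y, f (op x y) = wnode (f x) (f y)).
End Magma.
Arguments equidecomposable {M} op.
Arguments graded {M} op.
Arguments semigraded {M} op.
Arguments initial {M} op.
Arguments free_magma {M} op.
Arguments initial_part {M} op _.
Arguments indecomposable {M} op _.

(* A free magma is equidecomposable, and the size of a word is a grading;
   a grading is a semigrading, and well-founded induction on a semigrading
   shows that every element lies in the initial part.  Conversely, if M is
   equidecomposable and initial, evaluating words over the indecomposable
   elements is a magma morphism onto M (by initiality) which is injective
   (by equidecomposability and induction on words), hence an isomorphism. *)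

From Stdlib Require Import Lia Arith ProofIrrelevance ClassicalEpsilon.

Fixpoint wsize {A : Type} (w : word A) : nat :=
  match w with
  | wleaf _ => 1
  | wnode u v => wsize u + wsize v
  end.

Lemma wsize_gt0 {A : Type} (w : word A) : 0 < wsize w.
Proof. induction w; simpl; lia. Qed.

Section Magma.
Variable M : Type.
Variable op : M -> M -> M.

Lemma free_equidecomposable : free_magma op -> equidecomposable op.
Proof.
  intros [A [_ [f [f_inj [_ f_op]]]]] x y x' y' E.
  apply (f_equal f) in E; rewrite !f_op in E.
  injection E as Ex Ey; split; apply f_inj; assumption.
Qed.

Lemma free_graded : free_magma op -> graded op.
Proof.
  intros [A [_ [f [_ [_ f_op]]]]].
  exists (fun x => wsize (f x)); split.
  - intro x; apply wsize_gt0.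
  - intros x y; rewrite f_op; reflexivity.
Qed.

Lemma graded_semigraded : graded op -> semigraded op.
Proof.
  intros [l [l_gt0 l_op]]; exists l; split; [assumption|].
  intros x y; rewrite l_op; pose proof (l_gt0 x); pose proof (l_gt0 y); lia.
Qed.

Lemma semigraded_initial : semigraded op -> initial op.
Proof.
  intros [mu [_ mu_op]] x.
  induction x as [x IH] using (well_founded_induction (well_founded_ltof M mu)).
  destruct (classic (exists a b, op a b = x)) as [[a [b <-]] | x_indec].
  - destruct (mu_op a b); apply ip_op; apply IH; assumption.
  - apply ip_gen; exact x_indec.
Qed.

Lemma initial_part_indecomposable x :
  initial_part op x -> exists a, indecomposable op a.
Proof. induction 1; eauto. Qed.

Lemma free_magma_of_bijective_morphism (A : Type) (g : word A -> M) :
  inhabited A ->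
  (forall u v, g u = g v -> u = v) ->
  (forall x, exists w, g w = x) ->
  (forall u v, g (wnode u v) = op (g u) (g v)) ->
  free_magma op.
Proof.
  intros A_inh g_inj g_surj g_op.
  destruct (choice (fun x w => g w = x) g_surj) as [f gf].
  exists A; split; [exact A_inh|]; exists f; split; [|split].
  - intros x y E; rewrite <- (gf x), <- (gf y), E; reflexivity.
  - intro w; exists (g w); apply g_inj, gf.
  - intros x y; apply g_inj; rewrite g_op, !gf; reflexivity.
Qed.

Definition indecomposables : Type := { a : M | indecomposable op a }.

Fixpoint eval (w : word indecomposables) : M :=
  match w with
  | wleaf a => proj1_sig a
  | wnode u v => op (eval u) (eval v)
  end.

Lemma eval_inj :
  equidecomposable op -> forall u v, eval u = eval v -> u = v.
Proof.
  intros equi u.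
  induction u as [[a a_indec] | u1 IH1 u2 IH2];
    intros [[b b_indec] | v1 v2]; simpl; intro E.
  - subst b; rewrite (proof_irrelevance _ a_indec b_indec); reflexivity.
  - exfalso; apply a_indec; eauto.
  - exfalso; apply b_indec; eauto.
  - destruct (equi _ _ _ _ E); f_equal; auto.
Qed.

Lemma initial_part_eval x : initial_part op x -> exists w, eval w = x.
Proof.
  induction 1 as [x x_indec | x y _ [u <-] _ [v <-]].
  - exists (wleaf (exist _ x x_indec)); reflexivity.
  - exists (wnode u v); reflexivity.
Qed.

Lemma equidecomposable_initial_free :
  inhabited M -> equidecomposable op -> initial op -> free_magma op.
Proof.
  intros [m] equi init.
  apply (free_magma_of_bijective_morphism indecomposables eval).
  - destruct (initial_part_indecomposable m (init m)) as [a a_indec].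
    exact (inhabits (exist _ a a_indec)).
  - apply eval_inj; assumption.
  - intro x; apply initial_part_eval, init.
  - reflexivity.
Qed.

End Magma.

Theorem theorem4p8 (M : Type) (op : M -> M -> M) (HM : inhabited M) :
  ((equidecomposable op /\ graded op) <-> (equidecomposable op /\ semigraded op)) /\
  ((equidecomposable op /\ semigraded op) <-> (equidecomposable op /\ initial op)) /\
  ((equidecomposable op /\ initial op) <-> free_magma op).
Proof.
  assert (EG_ES : equidecomposable op /\ graded op -> equidecomposable op /\ semigraded op)
    by (intros [E G]; split; [exact E | apply graded_semigraded, G]).
  assert (ES_EI : equidecomposable op /\ semigraded op -> equidecomposable op /\ initial op)
    by (intros [E S]; split; [exact E | apply semigraded_initial, S]).
  assert (EI_F : equidecomposable op /\ initial op -> free_magma op)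
    by (intros [E I]; apply equidecomposable_initial_free; assumption).
  assert (F_EG : free_magma op -> equidecomposable op /\ graded op)
    by (intro F; split; [apply free_equidecomposable | apply free_graded]; exact F).
  split; [|split]; split; auto.
Qed.
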